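(* Let $\Gamma$ be a Deza graph with parameters $(n,k,k-1,a)$, $k>1$, $\beta=1$. Let $x,y$ be $NA$-vertices with $C(x)\ne C(y)$. Then (1) $x'$ and $y$ are adjacent if and only if $x$ and $y'$ are adjacent; (2) $x$ and $y$ are adjacent if and only if $x'$ and $y'$ are adjacent.
   Context: A Deza graph with parameters $(n,k,b,a)$, $a\le b$, is a $k$-regular graph on $n$ vertices in which any two distinct vertices have $a$ or $b$ common neighbours; $\beta$ is the number of vertices $u\ne v$ with exactly $b$ common neighbours with a given vertex $v$. Since $\beta=1$, for each vertex $x$ let $x_b$ denote the unique vertex having $b=k-1$ common neighbours with $x$. A vertex $x$ is an $A$-vertex if $x$ is adjacent to $x_b$, and an $NA$-vertex otherwise. For an $NA$-vertex $x$, $x'$ denotes the unique neighbour of $x$ not adjacent to $x_b$, $x_b'=(x')_b=(x_b)'$, and $C(x)=\{x,x',x_b,x_b'\}$. *)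

From mathcomp Require Import all_boot.
Set Implicit Arguments. Unset Strict Implicit. Unset Printing Implicit Defensive.

Definition simple_graph (T : finType) (e : rel T) : Prop :=
  symmetric e /\ irreflexive e.

Definition nbhd (T : finType) (e : rel T) (x : T) : {set T} := [set y | e x y].

Definition common (T : finType) (e : rel T) (x y : T) : {set T} :=
  [set z | e x z && e y z].

Definition deza (T : finType) (e : rel T) (n k b a : nat) : Prop :=
  [/\ simple_graph e, #|T| = n, (forall x, #|nbhd e x| = k), a <= b &
      forall x y, x != y -> #|common e x y| = a \/ #|common e x y| = b].

Definition beta_at (T : finType) (e : rel T) (b : nat) (v : T) : nat :=
  #|[set u | (u != v) && (#|common e v u| == b)]|.

(* x_b : the (unique, when beta = 1) vertex with b = k-1 common neighbours with x *)
Definition xb (T : finType) (e : rel T) (k : nat) (x : T) : T :=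
  odflt x [pick u | (u != x) && (#|common e x u| == k.-1)].

Definition A_vertex (T : finType) (e : rel T) (k : nat) (x : T) : bool :=
  e x (xb e k x).
Definition NA_vertex (T : finType) (e : rel T) (k : nat) (x : T) : bool :=
  ~~ e x (xb e k x).

Definition xprime (T : finType) (e : rel T) (k : nat) (x : T) : T :=
  odflt x [pick u | e x u && ~~ e u (xb e k x)].

Definition Cset (T : finType) (e : rel T) (k : nat) (x : T) : {set T} :=
  [set x; xprime e k x; xb e k x; xb e k (xprime e k x)].

From mathcomp Require Import all_boot.
Set Implicit Arguments. Unset Strict Implicit. Unset Printing Implicit Defensive.

(* Since beta = 1, x |-> x_b is a fixed-point-free involution and every vertex
   other than x and x_b has exactly a common neighbours with x.  The vertices x
   and x_b have the same neighbours except x' and x_b'; comparing the common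
   neighbourhoods of x and x_b with any third vertex shows that x' and x_b' are
   in turn twins, whence (x')_b = (x_b)' and x'' = x.  Consequently, for w
   outside C(x), the set N(x) /\ N(w) minus {x', w'} is closed under
   z |-> z_b; as a = |N(x) /\ N(w)| is even (look at w = x' for an NA-vertex
   x), x' and w' lie in N(x) /\ N(w) together.  Taking w = y and w = y' gives
   the two equivalences. *)

Lemma even_card_involutive (T : finType) (f : T -> T) (E : {set T}) :
  involutive f -> (forall z, f z != z) -> {in E, forall z, f z \in E} ->
  ~~ odd #|E|.
Proof.
move=> fK fP; elim: {E}_.+1 {-2}E (ltnSn #|E|) => // m IHm E.
rewrite ltnS => leEm fE.
have [-> | [z Ez]] := set_0Vmem E; first by rewrite cards0.
have Efz := fE z Ez.
have cardE : #|E| = #|E :\ z :\ f z|.+2.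
  by rewrite (cardsD1 z) (cardsD1 (f z) (E :\ z)) Ez !inE fP Efz.
rewrite cardE /= negbK; apply: IHm => [|u].
  by move: leEm; rewrite cardE => /ltnW.
rewrite !inE => /and3P[ufz uz Eu]; rewrite fE // andbT.
by rewrite (inj_eq (can_inj fK)) uz; apply: contra ufz => /eqP <-; rewrite fK.
Qed.

Lemma mem_eq_of_even_card (T : finType) (f : T -> T) (D : {set T}) (p q : T) :
  involutive f -> (forall z, f z != z) -> q != p ->
  {in D :\ p :\ q, forall z, f z \in D :\ p :\ q} -> ~~ odd #|D| ->
  (p \in D) = (q \in D).
Proof.
move=> fK fP qp fD; rewrite (cardsD1 p) (cardsD1 q (D :\ p)) !inE qp /=.
have /negPf odd_rest := even_card_involutive fK fP fD.
by case: (p \in D); case: (q \in D); rewrite ?add0n ?add1n /= ?odd_rest.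
Qed.

Lemma pick_unique (T : finType) (P : pred T) (x0 : T) :
  #|[set x | P x]| = 1 -> forall u, P u = (u == odflt x0 [pick x | P x]).
Proof.
move/eqP/cards1P=> [c /setP defP].
have Pc u : P u = (u == c) by have := defP u; rewrite !inE.
by case: pickP => [x | /(_ c)]; rewrite Pc ?eqxx // => /eqP ->.
Qed.

Lemma commonC (T : finType) (e : rel T) :
  symmetric e -> forall u v, common e u v = common e v u.
Proof. by move=> e_sym u v; apply/setP=> z; rewrite !inE andbC. Qed.

Section DezaBetaOne.

Variables (T : finType) (e : rel T) (n k a : nat).
Hypotheses (dezaG : deza e n k k.-1 a) (k_gt0 : 0 < k)
  (beta1 : forall v, beta_at e k.-1 v = 1).

Local Notation xb := (xb e k).
Local Notation xprime := (xprime e k).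

Let e_sym : symmetric e. Proof. by case: dezaG => -[]. Qed.
Let e_irr : irreflexive e. Proof. by case: dezaG => -[]. Qed.

Let adj_neq u z : e u z -> z != u.
Proof. by apply: contraTneq => ->; rewrite e_irr. Qed.

Lemma xbP v u : (u != v) && (#|common e v u| == k.-1) = (u == xb v).
Proof. exact: pick_unique (beta1 v) u. Qed.

Lemma xb_neq v : xb v != v.
Proof. by have := xbP v (xb v); rewrite eqxx => /andP[]. Qed.

Lemma card_common_xb v : #|common e v (xb v)| = k.-1.
Proof. by have := xbP v (xb v); rewrite eqxx => /andP[_ /eqP]. Qed.

Lemma card_common_other v u : u != v -> u != xb v -> #|common e v u| = a.
Proof.
move=> uv; have [_ _ _ _ /(_ v u)] := dezaG; rewrite eq_sym => /(_ uv).
by case=> // /eqP cvu; rewrite -xbP uv cvu.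
Qed.

Lemma xbK : involutive xb.
Proof.
move=> v; apply/eqP; rewrite eq_sym -xbP (eq_sym v) xb_neq.
by rewrite (commonC e_sym) card_common_xb eqxx.
Qed.

Lemma xprimeP v u : e v u && ~~ e u (xb v) = (u == xprime v).
Proof.
apply: pick_unique u.
have -> : [set u | e v u && ~~ e u (xb v)] = nbhd e v :\: common e v (xb v).
  by apply/setP=> u; rewrite !inE (e_sym u); case: (e v u); rewrite /= ?andbT.
have [_ _ card_nbhd _ _] := dezaG.
rewrite cardsD (setIidPr _) ?card_nbhd ?card_common_xb.
  by rewrite -subn1 subKn.
by apply/subsetP=> u; rewrite !inE => /andP[].
Qed.

Lemma adj_xprime v : e v (xprime v).
Proof. by have := xprimeP v (xprime v); rewrite eqxx => /andP[]. Qed.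

Lemma xprime_nadj_xb v : ~~ e (xprime v) (xb v).
Proof. by have := xprimeP v (xprime v); rewrite eqxx => /andP[]. Qed.

Lemma xprime_xb_nadj v : ~~ e (xprime (xb v)) v.
Proof. by rewrite -{2}(xbK v) xprime_nadj_xb. Qed.

Lemma adj_xb_eq v u : u != xprime v -> u != xprime (xb v) -> e (xb v) u = e v u.
Proof.
move=> u_v' u_xbv'; have := xprimeP v u; have := xprimeP (xb v) u.
rewrite xbK (negbTE u_v') (negbTE u_xbv') !(e_sym u).
by case: (e v u); case: (e (xb v) u).
Qed.

(* The common neighbourhoods of v and of v_b with y both have a elements and
   agree outside v' and v_b'. *)
Lemma adj_xprime_xb_eq v y :
  y != v -> y != xb v -> e (xprime (xb v)) y = e (xprime v) y.
Proof.
move=> yv yxb.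
have common_eq : common e v y :\ xprime v = common e (xb v) y :\ xprime (xb v).
  apply/setP=> z; rewrite !inE.
  have [-> | zv'] := eqVneq z (xprime v).
    by rewrite (e_sym (xb v)) (negbTE (xprime_nadj_xb v)) andbF.
  have [-> | zxbv'] := eqVneq z (xprime (xb v)).
    by rewrite (e_sym v) (negbTE (xprime_xb_nadj v)).
  by rewrite adj_xb_eq.
have := cardsD1 (xprime v) (common e v y).
have := cardsD1 (xprime (xb v)) (common e (xb v) y).
rewrite -common_eq !card_common_other ?xbK // !inE !adj_xprime /= !(e_sym y).
by move=> -> /addIn; case: (e (xprime (xb v)) y); case: (e (xprime v) y).
Qed.

Lemma xb_xprime v : xb (xprime v) = xprime (xb v).
Proof.
have [_ _ card_nbhd _ _] := dezaG.
have common_eq : common e (xprime v) (xprime (xb v)) = nbhd e (xprime v) :\ v.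
  apply/setP=> z; rewrite !inE.
  have [-> | zv] := eqVneq z v.
    by rewrite (negbTE (xprime_xb_nadj v)) andbF.
  have [-> | zxb] := eqVneq z (xb v).
    by rewrite (negbTE (xprime_nadj_xb v)).
  by rewrite adj_xprime_xb_eq ?andbb.
have card_common : #|common e (xprime v) (xprime (xb v))| = k.-1.
  have := cardsD1 v (nbhd e (xprime v)).
  rewrite common_eq card_nbhd inE e_sym adj_xprime add1n => k_eq.
  by rewrite [in RHS]k_eq.
have neq_xprime : xprime (xb v) != xprime v.
  by apply: contraTneq (adj_xprime (xb v)) => ->; rewrite e_sym xprime_nadj_xb.
by apply/esym/eqP; rewrite -xbP neq_xprime card_common eqxx.
Qed.

Lemma xprimeK : involutive xprime.
Proof.
move=> v; apply/esym/eqP; rewrite -xprimeP xb_xprime e_sym adj_xprime.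
by rewrite e_sym xprime_xb_nadj.
Qed.

Lemma xprime_eq u v : (xprime u == v) = (u == xprime v).
Proof. by apply/eqP/eqP=> [<- | ->]; rewrite xprimeK. Qed.

Lemma nadj_xb_xprime u : ~~ e u (xb (xprime u)).
Proof. by rewrite xb_xprime e_sym xprime_xb_nadj. Qed.

Lemma xb_neq_xprime u z : e u z -> xb z != xprime u.
Proof. by apply: contraTneq => xbz; rewrite -(xbK z) xbz nadj_xb_xprime. Qed.

Lemma adj_xb u z : e u z -> z != xprime u -> e u (xb z).
Proof.
move=> uz zu'.
have uz' : u != xprime z by rewrite -xprime_eq eq_sym.
have uxbz' : u != xprime (xb z) by rewrite -xprime_eq eq_sym xb_neq_xprime.
by rewrite e_sym adj_xb_eq // e_sym.
Qed.

Lemma xb_common_closed u w :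
  {in common e u w :\ xprime u :\ xprime w,
    forall z, xb z \in common e u w :\ xprime u :\ xprime w}.
Proof.
move=> z; rewrite !inE => /and4P[zw' zu' uz wz].
by rewrite (xb_neq_xprime wz) (xb_neq_xprime uz) !adj_xb.
Qed.

Lemma even_a_of_NA v : NA_vertex e k v -> ~~ odd a.
Proof.
rewrite /NA_vertex => NAv; have v'v := adj_neq (adj_xprime v).
have v'xb : xprime v != xb v by apply: contraNneq NAv => <-; apply: adj_xprime.
rewrite -(card_common_other v'v v'xb).
apply: even_card_involutive xbK xb_neq _ => z zS.
suff /xb_common_closed :
    z \in common e v (xprime v) :\ xprime v :\ xprime (xprime v).
  by rewrite !inE => /and3P[].
move: zS; rewrite xprimeK !inE => /andP[vz v'z].
by rewrite vz v'z (adj_neq vz) (adj_neq v'z).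
Qed.

Lemma adj_xprime_swap u w : ~~ odd a -> w != u -> w != xb u ->
  xprime w != xprime u -> e (xprime u) w = e u (xprime w).
Proof.
move=> a_even wu wxb w'u'.
have := mem_eq_of_even_card xbK xb_neq w'u' (@xb_common_closed u w).
rewrite card_common_other // => /(_ a_even).
by rewrite !inE !adj_xprime andbT (e_sym (xprime u)).
Qed.

Lemma Cset_eq x y : y \in Cset e k x -> Cset e k y = Cset e k x.
Proof.
rewrite /Cset !inE -!orbA => /or4P[] /eqP ->.
all: rewrite ?xprimeK ?xb_xprime ?xbK ?xprimeK //.
all: by apply/setP=> z; rewrite !inE; do !case: eqP.
Qed.

End DezaBetaOne.

Theorem lemma16 (T : finType) (e : rel T) (n k a : nat) :
  deza e n k k.-1 a -> 1 < k ->
  (forall v : T, beta_at e k.-1 v = 1) ->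
  forall x y : T,
    NA_vertex e k x -> NA_vertex e k y -> Cset e k x != Cset e k y ->
    (e (xprime e k x) y = e x (xprime e k y)) /\
    (e x y = e (xprime e k x) (xprime e k y)).
Proof.
(* Only x has to be an NA-vertex: this is what makes a even. *)
move=> dezaG /ltnW k_gt0 beta1 x y NAx _ CxCy.
have xprimeK := xprimeK dezaG k_gt0 beta1.
have xprime_eq := xprime_eq dezaG k_gt0 beta1.
have a_even := even_a_of_NA dezaG k_gt0 beta1 NAx.
have swap := adj_xprime_swap dezaG k_gt0 beta1 a_even.
have : y \notin Cset e k x.
  by apply: contra CxCy => /(Cset_eq dezaG k_gt0 beta1) ->.
rewrite !inE !negb_or (xb_xprime dezaG k_gt0 beta1).
case/andP=> /andP[/andP[yx yx'] yxb] yxb'.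
split; first by rewrite swap // xprime_eq xprimeK.
by rewrite swap; rewrite ?xprimeK ?xprime_eq.
Qed.
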